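(* Let $Q$ be a non-empty quasi-order. The quasi-orders $(\mathsf{T_f}(Q),\le_T)$ and $(i^F_{\omega^\omega}(Q),\preceq)$ are equivalent. That is, there are maps $f:\mathsf{T_f}(Q)\to i^F_{\omega^\omega}(Q)$ and $g: i^F_{\omega^\omega}(Q)\to\mathsf{T_f}(Q)$ with the following properties: - both are order-embeddings, i.e. $x\le y\iff f(x)\le f(y)$, and likewise for $g$; - $g(f(\tau))\equiv\tau$ for all $\tau\in\mathsf{T_f}(Q)$; - $f(g(\sigma))\equiv\sigma$ for all $\sigma\in i^F_{\omega^\omega}(Q)$. Here $a\equiv b$ means $a\le b$ and $b\le a$.
   Context: A quasi-order is a set with a reflexive, transitive relation. Trees: $\mathsf{T_f}(Q)$ is the smallest class containing the leaf $\cdot q$ for each $q\in Q$, and containing $\cdot(\tau_0,\dots,\tau_{k-1})$ (an unlabelled root whose children are the $\tau_i$) for every finite set $\{\tau_0,\dots,\tau_{k-1}\}\subseteq\mathsf{T_f}(Q)$ with $k\ge1$. Its order $\le_T$ is defined recursively: - $\cdot x\le_T\cdot y$ iff $x\le_Q y$; - $\cdot x\le_T\cdot(\tau_j)_{j<l}$ iff $\cdot x\le_T\tau_j$ for some $j$; - $\cdot(\sigma_i)_{i<k}\le_T\cdot(\tau_j)_{j<l}$ iff every $\sigma_i$ is $\le_T$ some $\tau_j$; - a non-leaf tree is never $\le_T$ a leaf. Sequences: a transfinite sequence over $Q$ of length $\alpha$ (with $\alpha\neq0$ an ordinal) is a function $\sigma:\alpha\to Q$, and $|\sigma|=\alpha$.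 Define $\sigma\preceq\tau$ if there is a strictly increasing $f:|\sigma|\to|\tau|$ with $\sigma(i)\le_Q\tau(f(i))$ for all $i$. Finite range means the sequence takes finitely many values. A proper tail of $\sigma$ is $i\mapsto\sigma(\delta+i)$ for some $0<\delta<|\sigma|$. The sequence $\sigma$ is indecomposable if it embeds into each of its proper tails. $i^F_{\omega^\omega}(Q)$ is the set of indecomposable finite-range sequences over $Q$ of length $<\omega^\omega$, ordered by $\preceq$. *)

From mathcomp Require Import all_boot.
From Stdlib Require List.

Set Implicit Arguments.
Unset Strict Implicit.
Unset Printing Implicit Defensive.

(* Ordinals below omega^omega, in Cantor normal form:                  *)
(*   omega^e1 + omega^e2 + ... + omega^ek  with e1 >= e2 >= ... >= ek  *)
(* represented by the non-increasing list [:: e1; ...; ek].            *)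

Definition cnf_ok (a : seq nat) : bool := sorted (fun x y => y <= x) a.

Definition ord := {a : seq nat | cnf_ok a}.

Definition ozero : ord := exist _ [::] isT.

(* strict ordinal order = lexicographic order on CNF lists *)
Fixpoint rlt (a b : seq nat) : bool :=
  match a, b with
  | _, [::] => false
  | [::], _ :: _ => true
  | x :: a', y :: b' => (x < y) || ((x == y) && rlt a' b')
  end.

Definition olt (a b : ord) : bool := rlt (proj1_sig a) (proj1_sig b).

(* ordinal addition d + i in CNF *)
Definition radd (d i : seq nat) : seq nat :=
  if i is e :: _ then [seq x <- d | e <= x] ++ i else d.

(* the unique g with d + g = a, when d <= a: drop the common prefix *)
Fixpoint rsub (a d : seq nat) : seq nat :=
  match a, d with
  | x :: a', y :: d' => if x == y then rsub a' d' else a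
  | _, _ => a
  end.

Lemma radd_ok d i : cnf_ok d -> cnf_ok i -> cnf_ok (radd d i).
Proof.
have tr : transitive (fun x y : nat => y <= x).
  by move=> x y z /= h1 h2; exact: leq_trans h2 h1.
rewrite /cnf_ok /radd; case: i => [|e i] // hd hi.
rewrite !(sorted_pairwise tr) in hd hi *.
rewrite pairwise_cat hi andbT; apply/andP; split; last first.
  by rewrite -(sorted_pairwise tr); apply: sorted_filter => //; rewrite (sorted_pairwise tr).
apply/allrelP => x y; rewrite mem_filter => /andP[ex _].
rewrite inE => /orP[/eqP -> //|yi].
move: hi => /= /andP[/allP /(_ y yi) ye _].
exact: leq_trans ye ex.
Qed.

Lemma rsub_ok a d : cnf_ok a -> cnf_ok (rsub a d).
Proof.
elim: a d => [|x a IH] [|y d] //= h.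
case: ifP => // _; apply: IH; exact: path_sorted h.
Qed.

Definition oadd (d i : ord) : ord :=
  exist _ (radd (proj1_sig d) (proj1_sig i)) (radd_ok (proj2_sig d) (proj2_sig i)).

Definition osub (a d : ord) : ord :=
  exist _ (rsub (proj1_sig a) (proj1_sig d)) (rsub_ok (proj1_sig d) (proj2_sig a)).

(* A sequence is its length together with a map on ordinals; only the  *)
(* values at indices i < length are ever used.                          *)

Record tseq (Q : Type) := TSeq { slen : ord; sval : ord -> Q }.

Section Seqs.
Variables (Q : Type) (R : Q -> Q -> Prop).

Definition sle (s t : tseq Q) : Prop :=
  exists f : ord -> ord,
    (forall i j, olt i j -> olt j (slen s) -> olt (f i) (f j)) /\
    (forall i, olt i (slen s) -> olt (f i) (slen t) /\ R (sval s i) (sval t (f i))).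

Definition tail (s : tseq Q) (delta : ord) : tseq Q :=
  TSeq (osub (slen s) delta) (fun i => sval s (oadd delta i)).

Definition indecomposable (s : tseq Q) : Prop :=
  forall delta, olt ozero delta -> olt delta (slen s) -> sle s (tail s delta).

Definition finite_range (s : tseq Q) : Prop :=
  exists L : list Q, forall i, olt i (slen s) -> List.In (sval s i) L.

Definition in_iF (s : tseq Q) : Prop :=
  slen s <> ozero /\ finite_range s /\ indecomposable s.

Definition iF := {s : tseq Q | in_iF s}.

Definition sleF (s t : iF) : Prop := sle (proj1_sig s) (proj1_sig t).

End Seqs.
Arguments sleF {Q} R s t.
Arguments sle {Q} R s t.

(* Trees T_f(Q): a leaf .q, or an unlabelled root with a non-empty     *)
(* finite family of children (first child t, further children ts).     *)

Inductive tree (Q : Type) : Type :=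
| Leaf (q : Q)
| Node (t : tree Q) (ts : seq (tree Q)).

Inductive leT (Q : Type) (R : Q -> Q -> Prop) : tree Q -> tree Q -> Prop :=
| leT_LL x y : R x y -> leT R (Leaf x) (Leaf y)
| leT_LN x t ts :
    (exists2 u, List.In u (t :: ts) & leT R (Leaf x) u) ->
    leT R (Leaf x) (Node t ts)
| leT_NN s ss t ts :
    (forall v, List.In v (s :: ss) -> exists2 u, List.In u (t :: ts) & leT R v u) ->
    leT R (Node s ss) (Node t ts).

(** A tree [t] is sent to a sequence of length [omega^(ht t)]: a leaf [q] to the one-term
    sequence [q], and a node whose children [c_0, ..., c_(m-1)] have maximal height [H] to
    the sequence of length [omega^(H+1)] whose [n]-th block of length [omega^H] carries the
    sequence of [c_(n mod m)]. Every child recurs in cofinally many blocks, which makes these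
    sequences indecomposable; and as an indecomposable sequence embedded into a concatenation,
    or into finitely many blocks, lies within one piece, embeddability of such sequences
    unfolds exactly into the recursive order on trees.

    Conversely, by induction on [e], a finite-range sequence [x] of length [omega^(e+1)]
    embeds into finitely many of its blocks followed by the sequence of the tree whose
    children are the trees (of height at most [e], with leaves in the range of [x]) that
    embed into cofinally many blocks of [x], and each of these pieces embeds back into [x].
    Splitting any length below [omega^omega] into powers of [omega], every finite-range
    sequence is thus equivalent to a concatenation of tree sequences that embed into it, so an
    indecomposable one is equivalent to a single tree sequence. *)

From mathcomp Require Import all_boot zify.
From Stdlib Require Import Classical IndefiniteDescription.

Set Implicit Arguments.
Unset Strict Implicit.
Unset Printing Implicit Defensive.

(** * Ordinals below omega^omega *)

Lemma rlt_irr a : rlt a a = false.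
Proof. by elim: a => //= x a ->; rewrite ltnn eqxx. Qed.

Lemma rlt_trans a b c : rlt a b -> rlt b c -> rlt a c.
Proof.
elim: a b c => [|x a IH] [|y b] [|z c] //=.
case/orP=> [h1|/andP[/eqP e1 h1]]; case/orP=> [h2|/andP[/eqP e2 h2]].
- by rewrite (ltn_trans h1 h2).
- by rewrite -e2 h1.
- by rewrite e1 h2.
- by rewrite e1 e2 eqxx (IH _ _ h1 h2) orbT.
Qed.

Lemma rlt_asym a b : rlt a b -> rlt b a = false.
Proof. by move=> h; apply/negP => /(rlt_trans h); rewrite rlt_irr. Qed.

Lemma rlt_total a b : a <> b -> rlt a b \/ rlt b a.
Proof.
elim: a b => [|x a IH] [|y b] //=; try by auto.
move=> ne; case: (ltngtP x y) => [h|h|e]; [by left|by right|subst y].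
by apply: IH => e; apply: ne; rewrite e.
Qed.

Lemma rlt_le_trans a b c : rlt a b -> rlt c b = false -> rlt a c.
Proof.
move=> h1 h2; case: (altP (c =P b)) => [->//|/eqP ne].
by case: (rlt_total ne) => h; [rewrite h in h2|exact: rlt_trans h1 h].
Qed.

Lemma rle_lt_trans a b c : rlt b a = false -> rlt b c -> rlt a c.
Proof.
move=> h1 h2; case: (altP (a =P b)) => [->//|/eqP ne].
by case: (rlt_total ne) => h; [exact: rlt_trans h h2|rewrite h in h1].
Qed.

Lemma rle_trans a b c : rlt b a = false -> rlt c b = false -> rlt c a = false.
Proof.
move=> h1 h2; apply/negbTE/negP => h.
by rewrite (rle_lt_trans h2 h) in h1.
Qed.

Lemma rlt_catl p a b : rlt (p ++ a) (p ++ b) = rlt a b.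
Proof. by elim: p => //= x p ->; rewrite ltnn eqxx. Qed.

Lemma rlt_nil a : rlt a [::] = false.
Proof. by case: a. Qed.

Lemma rlt_single r e : rlt r [:: e] = (if r is z :: _ then z < e else true).
Proof. by case: r => //= z r; rewrite rlt_nil andbF orbF. Qed.

Lemma rlt_cons l y b : rlt l [:: y] -> rlt l (y :: b).
Proof. by rewrite rlt_single; case: l => //= z l ->. Qed.

Lemma cnf_behead x a : cnf_ok (x :: a) -> cnf_ok a.
Proof. exact: path_sorted. Qed.

Lemma cnf_cons_ub x a : cnf_ok (x :: a) -> all (fun y => y <= x) a.
Proof.
have tr : transitive (fun x y : nat => y <= x) by move=> u v w /= h1 h2; exact: leq_trans h2 h1.
by rewrite /cnf_ok (sorted_pairwise tr) /= => /andP[].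
Qed.

Lemma cnf_filter P d : cnf_ok d -> cnf_ok (filter P d).
Proof. by apply: sorted_filter => u v w /= h1 h2; exact: leq_trans h2 h1. Qed.

Lemma cnf_drop k l : cnf_ok l -> cnf_ok (drop k l).
Proof. by elim: l k => [|x l IH] [|k] //= /cnf_behead /IH. Qed.

Lemma cnf_nseq_cat n e r : cnf_ok r -> rlt r [:: e] -> cnf_ok (nseq n e ++ r).
Proof.
rewrite rlt_single => hr he; elim: n => //= -[|n] /= IH; rewrite /cnf_ok /=.
  by case: r hr he {IH} => //= z r -> /ltnW ->.
by rewrite leqnn.
Qed.

Lemma cnf_nseq n e : cnf_ok (nseq n e).
Proof. by rewrite -(cats0 (nseq n e)); apply: cnf_nseq_cat. Qed.

Lemma filter_geq_nil y x d : cnf_ok (x :: d) -> x < y -> [seq z <- d | y <= z] = [::].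
Proof.
move=> hd hxy; apply/eqP; rewrite -(filter_pred0 d); apply/eqP; apply: eq_in_filter => z zd.
by apply/negbTE; rewrite -ltnNge (leq_ltn_trans (allP (cnf_cons_ub hd) z zd) hxy).
Qed.

Definition pre y (d : seq nat) := [seq x <- d | y <= x].
Definition post y (d : seq nat) := [seq x <- d | x < y].

Lemma pre_post y d : cnf_ok d -> d = pre y d ++ post y d.
Proof.
elim: d => //= x d IH hd; rewrite /pre /post /=.
case: (leqP y x) => hy /=; first by rewrite -IH //; exact: cnf_behead hd.
rewrite (filter_geq_nil hd hy); congr (_ :: _); apply/esym/all_filterP/allP => z zd.
exact: leq_ltn_trans (allP (cnf_cons_ub hd) z zd) hy.
Qed.

Lemma post_lt y d : rlt (post y d) [:: y].
Proof.
rewrite rlt_single; case E: (post y d) => [|z l] //.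
have : z \in post y d by rewrite E inE eqxx.
by rewrite mem_filter => /andP[].
Qed.

Lemma radd_mono d i j : cnf_ok d -> rlt i j -> rlt (radd d i) (radd d j).
Proof.
move=> hd; case: j => [|y j]; first by rewrite rlt_nil.
case: i => [_|x i /= /orP[hxy|/andP[/eqP exy hij]]].
  by rewrite /radd {1}(pre_post y hd) rlt_catl; apply/rlt_cons/post_lt.
- rewrite /radd (pre_post y (cnf_filter _ hd)) -catA.
  have -> : pre y [seq z <- d | x <= z] = pre y d.
    rewrite /pre -filter_predI; apply: eq_filter => z /=.
    by case: (leqP y z) => //= hz; rewrite (leq_trans (ltnW hxy) hz).
  rewrite rlt_catl; apply/rlt_cons; rewrite rlt_single.
  by case E: post (post_lt y (pre x d)) => [|z l] //; rewrite rlt_single.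
- by subst y; rewrite /radd rlt_catl /= ltnn eqxx.
Qed.

Lemma rsub_subset a d : {subset rsub a d <= a}.
Proof.
elim: a d => [|x a IH] [|y d] //= z; case: ifP => // _ /IH.
by rewrite inE => ->; rewrite orbT.
Qed.

Lemma radd_cons y d r : (if r is z :: _ then z <= y else true) ->
  radd (y :: d) r = y :: radd d r.
Proof. by case: r => // z r h; rewrite /radd /= h. Qed.

Lemma rsub_self a : rsub a a = [::].
Proof. by elim: a => //= x a ->; rewrite eqxx. Qed.

Lemma rsubK a d : cnf_ok a -> cnf_ok d -> rlt a d = false -> radd d (rsub a d) = a.
Proof.
elim: d a => [|y d IH] [|x a] //= ha hd; case: (ltngtP x y) => //= hxy.
  by move=> _; rewrite /radd /= leqNgt hxy /= (filter_geq_nil hd hxy).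
subst y => h; rewrite radd_cons; first by rewrite IH //; [exact: cnf_behead ha|exact: cnf_behead hd].
case E: (rsub a d) => [|z r] //.
have : z \in a by apply: (@rsub_subset a d); rewrite E inE eqxx.
exact: (allP (cnf_cons_ub ha)).
Qed.

Lemma raddK d i : cnf_ok d -> cnf_ok i -> rsub (radd d i) d = i.
Proof.
elim: d i => [|y d IH] i hd hi; first by case: i {hi}.
case: i hi => [_|z i hi]; first by rewrite /radd rsub_self.
case: (leqP z y) => hzy.
  rewrite radd_cons //.
  have -> : rsub (y :: radd d (z :: i)) (y :: d) = rsub (radd d (z :: i)) d by rewrite /= eqxx.
  by rewrite IH //; exact: cnf_behead hd.
rewrite /radd /= leqNgt hzy /= (filter_geq_nil hd hzy) /=.
by rewrite (_ : (z == y) = false) //; apply/negbTE; rewrite neq_ltn hzy orbT.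
Qed.

Lemma radd_ge d i : cnf_ok d -> rlt (radd d i) d = false.
Proof.
move=> hd; case: i => [|z i]; first exact: rlt_irr.
by apply: rlt_asym; exact: (@radd_mono d [::] (z :: i) hd isT).
Qed.

Lemma rsub_mono a b d : cnf_ok a -> cnf_ok b -> cnf_ok d -> rlt a d = false -> rlt b d = false ->
  rlt a b -> rlt (rsub a d) (rsub b d).
Proof.
move=> ha hb hd had hbd hab; case: (altP (rsub a d =P rsub b d)) => [e|/eqP ne].
  by move: hab; rewrite -(rsubK ha hd had) e rsubK // rlt_irr.
case: (rlt_total ne) => // /(radd_mono hd); rewrite !rsubK // => hba.
by rewrite (rlt_asym hba) in hab.
Qed.

Lemma rsub_lt a b d : cnf_ok a -> cnf_ok b -> cnf_ok d -> rlt a d = false ->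
  rlt a (radd d b) -> rlt (rsub a d) b.
Proof.
move=> ha hb hd had h; case: (altP (rsub a d =P b)) => [e|/eqP ne].
  by rewrite -e rsubK // rlt_irr in h.
case: (rlt_total ne) => // /(radd_mono hd); rewrite rsubK // => h'.
by rewrite (rlt_asym h') in h.
Qed.

Fixpoint cntlead e (l : seq nat) : nat :=
  if l is x :: l' then (if x == e then (cntlead e l').+1 else 0) else 0.

Lemma cntlead_split e l : l = nseq (cntlead e l) e ++ drop (cntlead e l) l.
Proof. by elim: l => //= x l IH; case: eqP => [->|] //=; rewrite -IH. Qed.

Lemma cntlead_nseq_cat e n r : rlt r [:: e] -> cntlead e (nseq n e ++ r) = n.
Proof.
rewrite rlt_single => hr; elim: n => /= [|n ->]; last by rewrite eqxx.
by case: r hr => //= z r; rewrite ltn_neqAle => /andP[/negbTE ->].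
Qed.

Lemma rlt_nseq_cat n n' e r r' : rlt r [:: e] -> n < n' ->
  rlt (nseq n e ++ r) (nseq n' e ++ r').
Proof.
move=> hr hn; rewrite -(subnKC (ltnW hn)) nseqD -catA rlt_catl.
by rewrite (_ : n' - n = (n' - n).-1.+1) /=; [exact: rlt_cons|lia].
Qed.

Lemma rlt_nseq_cat_succ n e r : rlt r [:: e] -> rlt (nseq n e ++ r) (nseq n.+1 e).
Proof. by move=> h; rewrite -(cats0 (nseq n.+1 e)); exact: rlt_nseq_cat. Qed.

Lemma rlt_nseq_cat_pow n e r : rlt r [:: e] -> rlt (nseq n e ++ r) [:: e.+1].
Proof.
case: n => [|n] h /=; last by rewrite ltnSn.
by apply: rlt_trans h _; rewrite /= ltnSn.
Qed.

Lemma drop_cntlead_lt l e : cnf_ok l -> rlt l [:: e.+1] -> rlt (drop (cntlead e l) l) [:: e].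
Proof.
elim: l => [|x l IH] //= hl hx.
case: eqP => [ex|/eqP ne] /=; last first.
  by move: hx; rewrite rlt_nil andbF orbF ltnS => hx; rewrite ltn_neqAle ne hx.
apply: IH; first exact: cnf_behead hl.
by rewrite rlt_single; case: l hl {hx} => //= y l /andP[hy _]; rewrite -ex ltnS.
Qed.

Lemma ord_inj (a b : ord) : proj1_sig a = proj1_sig b -> a = b.
Proof. by case: a b => a ha [b hb] /= e; subst b; congr exist; exact: bool_irrelevance. Qed.

Lemma ord_cnf (a : ord) : cnf_ok (proj1_sig a).
Proof. exact: proj2_sig a. Qed.

Definition to_ord (l : seq nat) : ord := insubd ozero l.

Lemma to_ordK l : cnf_ok l -> proj1_sig (to_ord l) = l.
Proof. by move=> h; rewrite /to_ord /insubd insubT. Qed.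

Definition ole (a b : ord) := olt b a = false.

Lemma olt_irr a : olt a a = false. Proof. exact: rlt_irr. Qed.
Lemma ole_refl a : ole a a. Proof. exact: rlt_irr. Qed.
Lemma olt_trans a b c : olt a b -> olt b c -> olt a c. Proof. exact: rlt_trans. Qed.
Lemma olt_le_trans a b c : olt a b -> ole b c -> olt a c. Proof. exact: rlt_le_trans. Qed.
Lemma ole_lt_trans a b c : ole a b -> olt b c -> olt a c. Proof. exact: rle_lt_trans. Qed.
Lemma ole_trans a b c : ole a b -> ole b c -> ole a c. Proof. exact: rle_trans. Qed.
Lemma oltW a b : olt a b -> ole a b. Proof. exact: rlt_asym. Qed.
Lemma olt0 a : olt a ozero = false. Proof. exact: rlt_nil. Qed.
Lemma ole0 a : ole ozero a. Proof. exact: rlt_nil. Qed.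

Lemma olt_total a b : a <> b -> olt a b \/ olt b a.
Proof. by move=> ne; apply: rlt_total => e; apply: ne; exact: ord_inj. Qed.

Lemma ogt0 a : a <> ozero -> olt ozero a.
Proof. by case: a => [[|x a] h] // ne; case: ne; exact: ord_inj. Qed.

Lemma osubKC d a : ole d a -> oadd d (osub a d) = a.
Proof. by move=> h; apply: ord_inj; apply: rsubK => //; exact: ord_cnf. Qed.

Lemma oaddK d i : osub (oadd d i) d = i.
Proof. by apply: ord_inj; apply: raddK; exact: ord_cnf. Qed.

Lemma oadd_mono d i j : olt i j -> olt (oadd d i) (oadd d j).
Proof. by apply: radd_mono; exact: ord_cnf. Qed.

Lemma oadd_ge d i : ole d (oadd d i).
Proof. by apply: radd_ge; exact: ord_cnf. Qed.

Lemma osub_mono a b d : ole d a -> ole d b -> olt a b -> olt (osub a d) (osub b d).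
Proof. by apply: rsub_mono; exact: ord_cnf. Qed.

Lemma osub_lt a b d : ole d a -> olt a (oadd d b) -> olt (osub a d) b.
Proof. by apply: rsub_lt; exact: ord_cnf. Qed.

Lemma oadd_lt d i a : ole d a -> olt i (osub a d) -> olt (oadd d i) a.
Proof. by move=> hd /(oadd_mono d); rewrite osubKC. Qed.

Lemma oadd_ltr d i j : olt (oadd d i) (oadd d j) -> olt i j.
Proof. by move=> h; rewrite -(oaddK d i) -(oaddK d j); apply: osub_mono => //; exact: oadd_ge. Qed.

Definition opow e : ord := to_ord [:: e].
Definition opow_mul e n : ord := to_ord (nseq n e).

Lemma val_opow e : proj1_sig (opow e) = [:: e].
Proof. exact: to_ordK. Qed.

Lemma val_opow_mul e n : proj1_sig (opow_mul e n) = nseq n e.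
Proof. exact/to_ordK/cnf_nseq. Qed.

Lemma olt_opow i e : olt i (opow e) = rlt (proj1_sig i) [:: e].
Proof. by rewrite /olt val_opow. Qed.

Lemma opow_mul0 e : opow_mul e 0 = ozero.
Proof. by apply: ord_inj; rewrite val_opow_mul. Qed.

Lemma opow_mul_lt e a b : olt (opow_mul e a) (opow_mul e b) = (a < b).
Proof.
rewrite /olt !val_opow_mul; case: (ltnP a b) => h.
  by rewrite -(cats0 (nseq a e)) -(cats0 (nseq b e)) rlt_nseq_cat.
by rewrite -(subnKC h) nseqD -{2}(cats0 (nseq b e)) rlt_catl rlt_nil.
Qed.

Lemma opow_mul_le e a b : ole (opow_mul e a) (opow_mul e b) <-> a <= b.
Proof. by rewrite /ole opow_mul_lt ltnNge; case: (a <= b). Qed.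

Lemma opow_mul_lt_pow e n : olt (opow_mul e n) (opow e.+1).
Proof. by rewrite olt_opow val_opow_mul; case: n => //= n; rewrite ltnSn. Qed.

Lemma val_oadd_opow_mul e n j : olt j (opow e.+1) ->
  proj1_sig (oadd (opow_mul e n) j) = nseq n e ++ proj1_sig j.
Proof.
rewrite olt_opow /= val_opow_mul rlt_single; case: (proj1_sig j) => [|z l] hz.
  by rewrite cats0.
rewrite /radd (_ : [seq x <- nseq n e | z <= x] = nseq n e) //.
by apply/all_filterP/allP => x; rewrite mem_nseq => /andP[_ /eqP ->].
Qed.

Lemma olt_opow0 i : olt i (opow 0) -> i = ozero.
Proof. by rewrite olt_opow rlt_single => h; apply: ord_inj; move: h; case: (proj1_sig i). Qed.

Lemma opow_gt0 e : olt ozero (opow e).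
Proof. by rewrite olt_opow. Qed.

Lemma opow_ltS i e : olt i (opow e) -> olt i (opow e.+1).
Proof. by rewrite !olt_opow => /rlt_trans; apply; rewrite /= ltnSn. Qed.

Lemma oadd_opow_mul_ltS e n r : olt r (opow e) -> olt (oadd (opow_mul e n) r) (opow_mul e n.+1).
Proof.
move=> hr; rewrite /olt val_oadd_opow_mul ?opow_ltS // val_opow_mul.
by apply: rlt_nseq_cat_succ; rewrite -olt_opow.
Qed.

Lemma oadd_opow_mul_lt_pow e n r : olt r (opow e) -> olt (oadd (opow_mul e n) r) (opow e.+1).
Proof.
move=> hr; rewrite olt_opow val_oadd_opow_mul ?opow_ltS //.
by apply: rlt_nseq_cat_pow; rewrite -olt_opow.
Qed.

Lemma oadd_opow_mul_ltl e n n' r r' : olt r (opow e) -> olt r' (opow e) -> n < n' ->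
  olt (oadd (opow_mul e n) r) (oadd (opow_mul e n') r').
Proof.
move=> hr hr' hn; rewrite /olt !val_oadd_opow_mul ?opow_ltS //.
by apply: rlt_nseq_cat; rewrite // -olt_opow.
Qed.

Lemma oadd_opow_mulA e m n j : olt j (opow e.+1) ->
  oadd (opow_mul e m) (oadd (opow_mul e n) j) = oadd (opow_mul e (m + n)) j.
Proof.
move=> hj; have hnj : olt (oadd (opow_mul e n) j) (opow e.+1).
  rewrite olt_opow val_oadd_opow_mul // rlt_single.
  by case: n => [|n] /=; [rewrite -rlt_single -olt_opow|rewrite ltnSn].
by apply: ord_inj; rewrite !val_oadd_opow_mul // nseqD catA.
Qed.

Lemma osub_opow_mul e N : osub (opow e.+1) (opow_mul e N) = opow e.+1.
Proof.
apply: ord_inj; rewrite /= val_opow val_opow_mul; case: N => //= N.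
by rewrite (_ : (e.+1 == e) = false) //; apply/negbTE; rewrite neq_ltn ltnSn orbT.
Qed.

Lemma osub_opow_mulS e k : osub (opow_mul e k.+1) (opow_mul e k) = opow e.
Proof. by apply: ord_inj; rewrite /= !val_opow_mul val_opow; elim: k => //= k ->; rewrite eqxx. Qed.

(** Quotient and remainder of [i < omega^(e+1)] by [omega^e]. *)
Definition odiv e (i : ord) : nat := cntlead e (proj1_sig i).
Definition omod e (i : ord) : ord := to_ord (drop (odiv e i) (proj1_sig i)).

Lemma val_omod e i : proj1_sig (omod e i) = drop (odiv e i) (proj1_sig i).
Proof. exact/to_ordK/cnf_drop/ord_cnf. Qed.

Lemma omod_lt e i : olt i (opow e.+1) -> olt (omod e i) (opow e).
Proof. by rewrite !olt_opow val_omod; apply: drop_cntlead_lt; exact: ord_cnf. Qed.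

Lemma odivmod e i : olt i (opow e.+1) -> oadd (opow_mul e (odiv e i)) (omod e i) = i.
Proof.
move=> hi; apply: ord_inj; rewrite val_oadd_opow_mul ?opow_ltS ?omod_lt //.
by rewrite val_omod -cntlead_split.
Qed.

Lemma odiv_oadd e n r : olt r (opow e) -> odiv e (oadd (opow_mul e n) r) = n.
Proof. by move=> hr; rewrite /odiv val_oadd_opow_mul ?opow_ltS // cntlead_nseq_cat -?olt_opow. Qed.

Lemma omod_oadd e n r : olt r (opow e) -> omod e (oadd (opow_mul e n) r) = r.
Proof.
move=> hr; apply: ord_inj; rewrite val_omod odiv_oadd // val_oadd_opow_mul ?opow_ltS //.
by rewrite -{1}(size_nseq n e) drop_size_cat.
Qed.

Lemma olt_opow_mul_odiv e i : olt i (opow e.+1) -> olt i (opow_mul e (odiv e i).+1).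
Proof. by move=> hi; rewrite -{1}(odivmod hi); apply/oadd_opow_mul_ltS/omod_lt. Qed.

Lemma odiv_interval e n i : ole (opow_mul e n) i -> olt i (opow_mul e n.+1) -> odiv e i = n.
Proof.
move=> hlo hhi; have hi : olt i (opow e.+1) := olt_trans hhi (opow_mul_lt_pow e n.+1).
have hr := omod_lt hi; case: (ltngtP (odiv e i) n) => // hk.
- have : olt i (opow_mul e n).
    rewrite -(odivmod hi); apply: olt_le_trans (oadd_opow_mul_ltS _ hr) _.
    exact/opow_mul_le.
  by rewrite /ole in hlo; rewrite hlo.
- have : ole (opow_mul e n.+1) i.
    by rewrite -(odivmod hi); apply: ole_trans (oadd_ge _ _); exact/opow_mul_le.
  by rewrite /ole hhi.
Qed.

(** * Embeddings of transfinite sequences *)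

Section Embeddings.
Variables (Q : Type) (R : Q -> Q -> Prop).
Hypothesis R_refl : forall x, R x x.
Hypothesis R_trans : forall x y z, R x y -> R y z -> R x z.

Local Notation sle := (sle R).

Definition incr (f : ord -> ord) (n : ord) :=
  forall i j, olt i j -> olt j n -> olt (f i) (f j).

Lemma incr_le f n i j : incr f n -> ole i j -> olt j n -> ole (f i) (f j).
Proof.
move=> hf hij hj; case: (altP (i =P j)) => [->|/eqP ne]; first exact: ole_refl.
by case: (olt_total ne) => h; [exact/oltW/hf|rewrite /ole h in hij].
Qed.

Lemma sle_refl s : sle s s.
Proof. by exists id. Qed.

Lemma sle_trans s t u : sle s t -> sle t u -> sle s u.
Proof.
move=> [f [hf1 hf2]] [g [hg1 hg2]]; exists (g \o f); split => [i j hij hj|i hi] /=.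
  by apply: hg1; [exact: hf1|case: (hf2 _ hj)].
by case: (hf2 _ hi) => /hg2 [h1 h2] h3; split => //; exact: R_trans h3 h2.
Qed.

Definition sle_within (s t : tseq Q) (lo hi : ord) : Prop :=
  exists f : ord -> ord, incr f (slen s) /\
    forall i, olt i (slen s) -> [/\ ole lo (f i), olt (f i) hi, olt (f i) (slen t)
                                 & R (sval s i) (sval t (f i))].

Lemma sle_within_sle s t lo hi : sle_within s t lo hi -> sle s t.
Proof. by move=> [f [hf1 hf2]]; exists f; split => // i /hf2 []. Qed.

Lemma sle_within_full s t : sle s t -> sle_within s t ozero (slen t).
Proof. by move=> [f [hf1 hf2]]; exists f; split => // i /hf2 [h1 h2]; split => //; exact: ole0. Qed.

Lemma sle_within_trans s s' t lo hi : sle s s' -> sle_within s' t lo hi -> sle_within s t lo hi.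
Proof.
move=> [f [hf1 hf2]] [g [hg1 hg2]]; exists (g \o f); split => [i j hij hj|i hi0] /=.
  by apply: hg1; [exact: hf1|case: (hf2 _ hj)].
by case: (hf2 _ hi0) => /hg2 [h3 h4 h5 h6] h2; split => //; exact: R_trans h2 h6.
Qed.

Lemma sle_within_widen s t lo hi lo' hi' : ole lo' lo -> ole hi hi' ->
  sle_within s t lo hi -> sle_within s t lo' hi'.
Proof.
move=> h1 h2 [f [hf1 hf2]]; exists f; split => // i /hf2 [a b c d].
by split => //; [exact: ole_trans h1 a|exact: olt_le_trans b h2].
Qed.

Lemma sle_within_nil s t lo hi : slen s = ozero -> sle_within s t lo hi.
Proof. by move=> e; exists id; split => [i j _|i]; rewrite e olt0. Qed.

Lemma sle_within_tail s t d up : sle_within s t d up -> sle s (tail t d).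
Proof.
move=> [f [hf1 hf2]]; exists (fun i => osub (f i) d); split => [i j hij hj|i hi].
  case: (hf2 _ (olt_trans hij hj)) => a1 _ _ _; case: (hf2 _ hj) => b1 _ _ _.
  exact/osub_mono/hf1.
case: (hf2 _ hi) => a1 a2 a3 a4; split => /=; last by rewrite osubKC.
by apply: osub_mono => //; apply: oltW; exact: ole_lt_trans a1 a3.
Qed.

Lemma tail_sle t d : ole d (slen t) -> sle (tail t d) t.
Proof.
move=> hd; exists (oadd d); split => [i j hij _|i hi]; first exact: oadd_mono.
by split => //; exact: oadd_lt.
Qed.

Lemma indec_sle_within_split s t lo mid up : indecomposable R s ->
  sle_within s t lo up -> sle_within s t lo mid \/ sle_within s t mid up.
Proof.
move=> hs [f [hf1 hf2]].
case: (classic (forall i, olt i (slen s) -> olt (f i) mid)) => [hall|/not_all_ex_not [d hd]].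
  by left; exists f; split => // i hi; case: (hf2 _ hi) => a b c e; split => //; exact: hall.
have [hds hdm] : olt d (slen s) /\ ole mid (f d).
  by case: (olt d (slen s)) hd => hd; [split => //; apply/negbTE/negP => h; apply: hd|case: hd].
right; suff : sle_within (tail s d) t mid up.
  case: (altP (d =P ozero)) => [ed _|/eqP nd]; last first.
    by apply: sle_within_trans; apply: hs => //; exact: ogt0.
  exists f; split => // i hi0; case: (hf2 _ hi0) => a b c e; split => //.
  by apply: ole_trans hdm _; apply: incr_le hf1 _ hi0; rewrite ed; exact: ole0.
exists (fun j => f (oadd d j)); split => [i j hij hj|j hj].
  by apply: hf1; [exact: oadd_mono|exact: oadd_lt (oltW hds) hj].
have hj' := oadd_lt (oltW hds) hj; case: (hf2 _ hj') => a b c e; split => //.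
by apply: ole_trans hdm _; apply: incr_le hf1 (oadd_ge _ _) hj'.
Qed.

Definition tcat (x y : tseq Q) : tseq Q :=
  TSeq (oadd (slen x) (slen y))
       (fun i => if olt i (slen x) then sval x i else sval y (osub i (slen x))).

Definition initial (x : tseq Q) (d : ord) : tseq Q := TSeq d (sval x).

Lemma sle_within_tcat s s' t lo mid up : ole lo mid -> ole mid up ->
  sle_within s t lo mid -> sle_within s' t mid up -> sle_within (tcat s s') t lo up.
Proof.
move=> hlm hmu [f [hf1 hf2]] [g [hg1 hg2]].
have hs' i : ~~ olt i (slen s) -> olt i (slen (tcat s s')) -> olt (osub i (slen s)) (slen s').
  by move=> /negbTE hi; apply: osub_lt.
exists (fun i => if olt i (slen s) then f i else g (osub i (slen s))).
split => [i j hij hj|i hi] /=.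
  case: (boolP (olt j (slen s))) => hjs.
    by rewrite (olt_trans hij hjs); apply: hf1.
  have hjs' := hs' _ hjs hj; case: (boolP (olt i (slen s))) => his.
    case: (hf2 _ his) => _ a _ _; case: (hg2 _ hjs') => b _ _ _.
    exact: olt_le_trans a b.
  by apply: hg1 => //; apply: osub_mono => //; exact/negbTE.
case: (boolP (olt i (slen s))) => his.
  by case: (hf2 _ his) => a b c d; split => //; exact: olt_le_trans b hmu.
by case: (hg2 _ (hs' _ his hi)) => a b c d; split => //; exact: ole_trans hlm a.
Qed.

Lemma sle_within_tcatl s x y : sle s x -> sle_within s (tcat x y) ozero (slen x).
Proof.
move=> [f [hf1 hf2]]; exists f; split => // i /hf2 [a b].
by split => /=; rewrite ?a //; [exact: ole0|exact: olt_le_trans a (oadd_ge _ _)].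
Qed.

Lemma sle_within_tcatr s x y : sle s y -> sle_within s (tcat x y) (slen x) (slen (tcat x y)).
Proof.
move=> [f [hf1 hf2]]; exists (fun i => oadd (slen x) (f i)); split => [i j hij hj|i /hf2 [a b]].
  exact/oadd_mono/hf1.
have hlt : olt (oadd (slen x) (f i)) (slen (tcat x y)) by exact: oadd_mono.
by split => //=; [exact: oadd_ge|rewrite (oadd_ge (slen x) (f i)) oaddK].
Qed.

Lemma sle_tcatl_within lo s x y : sle_within s (tcat x y) lo (slen x) -> sle s x.
Proof. by move=> [f [hf1 hf2]]; exists f; split => // i /hf2 [a b c]; rewrite /= b. Qed.

Lemma sle_tcatr_within up s x y : sle_within s (tcat x y) (slen x) up -> sle s y.
Proof.
move=> [f [hf1 hf2]]; exists (fun i => osub (f i) (slen x)); split => [i j hij hj|i /hf2 [a b c d]].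
  case: (hf2 _ (olt_trans hij hj)) => a1 _ _ _; case: (hf2 _ hj) => b1 _ _ _.
  exact/osub_mono/hf1.
by split; [exact: osub_lt|move: d => /=; rewrite a].
Qed.

Lemma indec_sle_tcat s x y : indecomposable R s -> sle s (tcat x y) -> sle s x \/ sle s y.
Proof.
move=> hs /sle_within_full /(indec_sle_within_split (slen x) hs) [h|h].
  by left; exact: sle_tcatl_within h.
by right; exact: sle_tcatr_within h.
Qed.

Lemma sle_tcat x x' y y' : sle x x' -> sle y y' -> sle (tcat x y) (tcat x' y').
Proof.
move=> hx hy; apply: sle_within_sle (sle_within_tcat (ole0 _) (oadd_ge _ _) _ _).
  exact: sle_within_tcatl.
exact: sle_within_tcatr.
Qed.

Lemma sle_tcat_pointwise s x y :
  (forall i, olt i (slen s) ->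
     (olt i (slen x) -> R (sval s i) (sval x i)) /\
     (~~ olt i (slen x) -> olt i (slen y) /\ R (sval s i) (sval y i))) ->
  sle s (tcat x y).
Proof.
move=> h; exists (fun i => if olt i (slen x) then i else oadd (slen x) i); split.
  move=> i j hij hj; case: (boolP (olt j (slen x))) => hjx; first by rewrite (olt_trans hij hjx).
  case: (boolP (olt i (slen x))) => hix; last exact: oadd_mono.
  exact: olt_le_trans hix (oadd_ge _ _).
move=> i /h [h1 h2]; case: (boolP (olt i (slen x))) => hix /=.
  by rewrite hix; split; [exact: olt_le_trans hix (oadd_ge _ _)|exact: h1].
by case: (h2 hix) => a b; rewrite oadd_ge oaddK; split => //; exact: oadd_mono.
Qed.

Lemma sle_initial_tail x d : ole d (slen x) -> sle x (tcat (initial x d) (tail x d)).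
Proof.
move=> hd; exists id; split => // i hi /=; rewrite osubKC //; split => //.
by case: (boolP (olt i d)) => // /negbTE hid; rewrite osubKC.
Qed.

Lemma initial_sle x d : ole d (slen x) -> sle (initial x d) x.
Proof. by move=> hd; exists id; split => // i hi; split => //; exact: olt_le_trans hi hd. Qed.

Lemma sle_within_lt s t lo hi : olt ozero (slen s) -> sle_within s t lo hi -> olt lo hi.
Proof. by move=> hs [f [_ /(_ _ hs) [a b _ _]]]; exact: ole_lt_trans a b. Qed.

Lemma sle_within_sle_trans s X Y lo hi : sle_within s X lo hi -> olt hi (slen X) -> sle X Y ->
  exists2 h, olt h (slen Y) & sle_within s Y ozero h.
Proof.
move=> [g [hg1 hg2]] hhi [f [hf1 hf2]]; exists (f hi); first by case: (hf2 _ hhi).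
exists (f \o g); split => [i j hij hj|i /hg2 [a b c d]] /=.
  by apply: hf1; [exact: hg1|case: (hg2 _ hj)].
case: (hf2 _ c) => c' d'; split => //; [exact: ole0|exact: hf1|exact: R_trans d d'].
Qed.

End Embeddings.

(** * Blocks of a sequence of length omega^(e+1) *)

Section Blocks.
Variables (Q : Type) (R : Q -> Q -> Prop).
Hypothesis R_refl : forall x, R x x.
Hypothesis R_trans : forall x y z, R x y -> R y z -> R x z.

Local Notation sle := (sle R).
Local Notation sle_within := (sle_within R).

Definition block (X : tseq Q) e n : tseq Q :=
  TSeq (opow e) (fun r => sval X (oadd (opow_mul e n) r)).

Variables (X : tseq Q) (e : nat).
Hypothesis X_len : slen X = opow e.+1.

Lemma sle_block_within s n : sle s (block X e n) -> sle_within s X (opow_mul e n) (opow_mul e n.+1).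
Proof.
move=> [f [hf1 hf2]]; exists (fun i => oadd (opow_mul e n) (f i)); split => [i j hij hj|i hi].
  exact/oadd_mono/hf1.
case: (hf2 _ hi) => a b; split => //; [exact: oadd_ge|exact: oadd_opow_mul_ltS|].
by rewrite X_len; exact: oadd_opow_mul_lt_pow.
Qed.

Lemma sle_within_block s n : sle_within s X (opow_mul e n) (opow_mul e n.+1) -> sle s (block X e n).
Proof.
move=> [f [hf1 hf2]].
have hf i : olt i (slen s) -> oadd (opow_mul e n) (omod e (f i)) = f i /\ olt (omod e (f i)) (opow e).
  move=> /hf2 [a b c _]; rewrite X_len in c.
  by rewrite -(odiv_interval a b) odivmod //; split => //; exact: omod_lt.
exists (fun i => omod e (f i)); split => [i j hij hj|i hi].
  apply: (@oadd_ltr (opow_mul e n)).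
  by case: (hf _ (olt_trans hij hj)) => -> _; case: (hf _ hj) => -> _; exact: hf1.
by case: (hf _ hi) => E hlt; case: (hf2 _ hi) => _ _ _; rewrite /= E.
Qed.

Lemma block_sle n : sle (block X e n) X.
Proof. exact/(sle_within_sle (hi := opow_mul e n.+1))/sle_block_within/sle_refl. Qed.

Lemma indec_sle_within_block s N : indecomposable R s -> olt ozero (slen s) ->
  sle_within s X ozero (opow_mul e N) ->
  exists2 n, n < N & sle_within s X (opow_mul e n) (opow_mul e n.+1).
Proof.
move=> hs hne; rewrite -(opow_mul0 e); elim: N => [|N IH] h.
  case: h => f [_ /(_ _ hne) [a b _ _]].
  by move: (ole_lt_trans a b); rewrite olt_irr.
case: (indec_sle_within_split R_trans (opow_mul e N) hs h) => [/IH [n hn hn']|h'].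
  by exists n => //; exact: ltnW.
by exists N.
Qed.

Lemma tail_opow_mul_len N : slen (tail X (opow_mul e N)) = opow e.+1.
Proof. by rewrite /= X_len osub_opow_mul. Qed.

Lemma block_tail N n : sle (block (tail X (opow_mul e N)) e n) (block X e (N + n)).
Proof. by exists id; split => // i hi; split => //=; rewrite oadd_opow_mulA ?opow_ltS. Qed.

Variables (Y : tseq Q) (e' : nat).

Lemma sle_within_blocks (A : nat -> nat) :
  (forall n, sle_within (block X e n) Y (opow_mul e' (A n)) (opow_mul e' (A n.+1))) ->
  sle_within X Y (opow_mul e' (A 0)) (slen Y).
Proof.
move=> /functional_choice [Phi hPhi].
have A_incr n : A n < A n.+1.
  case: (hPhi n) => _ /(_ ozero (opow_gt0 e)) [a b _ _].
  by rewrite -(opow_mul_lt e'); exact: ole_lt_trans a b.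
have A_mono : {homo A : i j / i <= j} := homo_leq leqnn leq_trans (fun n => ltnW (A_incr n)).
exists (fun i => Phi (odiv e i) (omod e i)); split => [i j hij hj|i hi].
  have hi := olt_trans hij hj; rewrite X_len in hi hj.
  have [ri rj] := (omod_lt hi, omod_lt hj).
  move: hij; rewrite -{1}(odivmod hi) -{1}(odivmod hj) => hij.
  case: (ltngtP (odiv e i) (odiv e j)) => hk.
  - case: (hPhi (odiv e i)) => _ /(_ _ ri) [_ b _ _].
    case: (hPhi (odiv e j)) => _ /(_ _ rj) [a _ _ _].
    by apply: olt_le_trans b (ole_trans _ a); apply/opow_mul_le/A_mono.
  - by have := olt_trans hij (oadd_opow_mul_ltl rj ri hk); rewrite olt_irr.
  - by rewrite hk in hij *; case: (hPhi (odiv e j)) => + _; apply => //; exact: oadd_ltr hij.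
have hi' := hi; rewrite X_len in hi'.
case: (hPhi (odiv e i)) => _ /(_ _ (omod_lt hi')) [a b c d]; split => //.
  by apply: ole_trans a; apply/opow_mul_le/A_mono.
by move: d; rewrite /= odivmod.
Qed.

Lemma sle_within_late_blocks a0 :
  (forall n a, exists b, sle_within (block X e n) Y (opow_mul e' a) (opow_mul e' b)) ->
  sle_within X Y (opow_mul e' a0) (slen Y).
Proof.
move=> late; have [B hB] := @functional_choice _ _ _ (fun na : nat * nat => late na.1 na.2).
pose A := fix A n := if n is n'.+1 then B (n', A n') else a0.
by apply: (@sle_within_blocks A) => n; exact: hB (n, A n).
Qed.

Lemma sle_late_blocks :
  (forall n a, exists b, sle_within (block X e n) Y (opow_mul e' a) (opow_mul e' b)) -> sle X Y.
Proof. by move=> /(sle_within_late_blocks 0) /sle_within_sle. Qed.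

End Blocks.

(** * The sequence of a tree *)

Section TreeSequence.
Variables (Q : Type) (R : Q -> Q -> Prop).
Hypothesis R_refl : forall x, R x x.
Hypothesis R_trans : forall x y z, R x y -> R y z -> R x z.

Local Notation sle := (sle R).
Local Notation sle_within := (sle_within R).

Fixpoint tree_ind_in (P : tree Q -> Prop) (HL : forall q, P (Leaf q))
  (HN : forall t0 ts, (forall u, List.In u (t0 :: ts) -> P u) -> P (Node t0 ts))
  (t : tree Q) : P t :=
  match t with
  | Leaf q => HL q
  | Node t0 ts => HN t0 ts
      ((fix go (l : seq (tree Q)) : forall u, List.In u l -> P u :=
          match l with
          | [::] => fun u (h : List.In u [::]) => False_ind _ h
          | x :: l' => fun u h => match h with
                        | or_introl e => eq_ind x P (tree_ind_in HL HN x) u e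
                        | or_intror h' => go l' u h'
                        end
          end) (t0 :: ts))
  end.

Lemma In_nth (x0 c : tree Q) cs : List.In c cs -> exists2 j, j < size cs & nth x0 cs j = c.
Proof.
elim: cs => //= x cs IH [->|/IH [j hj e]]; first by exists 0.
by exists j.+1.
Qed.

Lemma nth_In (x0 : tree Q) cs j : j < size cs -> List.In (nth x0 cs j) cs.
Proof. by elim: cs j => //= x cs IH [|j] h; [left|right; exact: IH]. Qed.

Fixpoint ht (t : tree Q) : nat :=
  if t is Node t0 ts then (foldr maxn 0 (ht t0 :: map ht ts)).+1 else 0.

Definition hmax (cs : seq (tree Q)) := foldr maxn 0 (map ht cs).

Lemma hmax_ge cs c : List.In c cs -> ht c <= hmax cs.
Proof.
elim: cs => //= x cs IH [->|/IH h]; first exact: leq_maxl.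
exact: leq_trans h (leq_maxr _ _).
Qed.

Lemma foldr_maxn_mem x (l : seq nat) : foldr maxn 0 (x :: l) \in x :: l.
Proof.
elim: l x => [|y l IH] x /=; first by rewrite maxn0 inE eqxx.
move: (IH y) => /=; case: (leqP x (maxn y (foldr maxn 0 l))) => h hz.
  by rewrite inE hz orbT.
by rewrite inE eqxx.
Qed.

Lemma index_hmax_lt c0 cs : index (hmax (c0 :: cs)) (map ht (c0 :: cs)) < size (c0 :: cs).
Proof. by rewrite -(size_map ht) index_mem; exact: foldr_maxn_mem. Qed.

Lemma ht_nth_index_hmax c0 cs :
  ht (nth c0 (c0 :: cs) (index (hmax (c0 :: cs)) (map ht (c0 :: cs)))) = hmax (c0 :: cs).
Proof. by rewrite -(nth_map c0 0) ?index_hmax_lt // nth_index //; exact: foldr_maxn_mem. Qed.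

(** The [n]-th block of the sequence of a node is the sequence of its child number
    [n mod m], padded up to length [omega^H] by the sequence of a highest child. *)
Definition node_val (v0 : ord -> Q) (hs : seq nat) (vs : seq (ord -> Q)) (i : ord) : Q :=
  let H := foldr maxn 0 hs in
  let k := odiv H i %% size hs in
  let r := omod H i in
  nth v0 vs (if olt r (opow (nth 0 hs k)) then k else index H hs) r.

Fixpoint tval (t : tree Q) : ord -> Q :=
  match t with
  | Leaf q => fun _ => q
  | Node t0 ts => node_val (tval t0) (ht t0 :: map ht ts) (tval t0 :: map tval ts)
  end.

Arguments tval : simpl never.

Definition tree_seq (t : tree Q) : tseq Q := TSeq (opow (ht t)) (tval t).

Lemma tree_seq_gt0 t : olt ozero (slen (tree_seq t)).
Proof. exact: opow_gt0. Qed.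

Section Node.
Variables (t0 : tree Q) (ts : seq (tree Q)).
Let cs := t0 :: ts.
Let H := hmax cs.
Let m := size cs.
Let child n := nth t0 cs (n %% m).
Let cmax := nth t0 cs (index H (map ht cs)).
Let X := tree_seq (Node t0 ts).

Lemma node_len : slen X = opow H.+1.
Proof. by []. Qed.

Lemma child_In n : List.In (child n) cs.
Proof. by apply: nth_In; rewrite ltn_mod. Qed.

Lemma cmax_In : List.In cmax cs.
Proof. exact/nth_In/index_hmax_lt. Qed.

Lemma tval_node n r : olt r (opow H) ->
  tval (Node t0 ts) (oadd (opow_mul H n) r) =
  if olt r (opow (ht (child n))) then tval (child n) r else tval cmax r.
Proof.
move=> hr; change (node_val (tval t0) (map ht cs) (map tval cs) (oadd (opow_mul H n) r) =
  if olt r (opow (ht (child n))) then tval (child n) r else tval cmax r).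
rewrite /node_val -[foldr maxn 0 _]/H odiv_oadd // omod_oadd // size_map -/m.
have hk : n %% m < size cs by rewrite ltn_mod.
rewrite (nth_map t0 0) //; case: ifP => _; first by rewrite (nth_map t0).
by rewrite (nth_map t0) // index_hmax_lt.
Qed.

Lemma child_ht n : ht (child n) <= H.
Proof. exact/hmax_ge/child_In. Qed.

Lemma block_node_sle_tcat n : sle (block X H n) (tcat (tree_seq (child n)) (tree_seq cmax)).
Proof.
apply: sle_tcat_pointwise => r hr /=; rewrite tval_node //; split => [->//|/negbTE ->].
by split => //; rewrite /cmax ht_nth_index_hmax.
Qed.

Lemma child_sle_block n : sle (tree_seq (child n)) (block X H n).
Proof.
exists id; split => // r /= hr.
have hrH : olt r (opow H).
  by move: hr; rewrite !olt_opow => /rlt_le_trans; apply; rewrite /= ltnNge child_ht andbF.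
by split => //=; rewrite tval_node // hr.
Qed.

Lemma In_child c : List.In c cs -> exists j, child j = c.
Proof. by case/(In_nth t0) => j hj <-; exists j; rewrite /child modn_small. Qed.

Lemma child_sle c : List.In c cs -> sle (tree_seq c) X.
Proof.
case/In_child => j <-; apply: (sle_trans R_trans (child_sle_block j)).
exact (block_sle R_refl node_len j).
Qed.

Lemma sle_child_within s c a : List.In c cs -> sle s (tree_seq c) ->
  sle_within s X (opow_mul H a) (opow_mul H (m * a + m)).
Proof.
case/(In_nth t0) => j hj <- hs.
have hchild : child (m * a + j) = nth t0 cs j by rewrite /child mulnC modnMDl modn_small.
have hb := child_sle_block (m * a + j); rewrite hchild in hb.
have := sle_block_within node_len (sle_trans R_trans hs hb).
apply: sle_within_widen; apply/opow_mul_le.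
  by apply: leq_trans (leq_addr _ _); rewrite leq_pmull.
by rewrite ltn_add2l.
Qed.

Lemma block_node_within n a :
  sle_within (block X H n) X (opow_mul H (m * a + n)) (opow_mul H (m * a + n).+1).
Proof.
apply: (sle_block_within node_len); exists id; split => // r hr; split => //=.
by rewrite !tval_node // /child mulnC modnMDl.
Qed.

Lemma tval_node_child i : olt i (slen X) ->
  exists2 c, List.In c cs & exists2 r, olt r (slen (tree_seq c)) & tval (Node t0 ts) i = tval c r.
Proof.
move=> hi; have hr := omod_lt hi; rewrite -(odivmod hi) tval_node //.
case: ifP => hc; first by exists (child (odiv H i)); [exact: child_In|exists (omod H i)].
by exists cmax; [exact: cmax_In|exists (omod H i); rewrite //= /cmax ht_nth_index_hmax].
Qed.

Lemma node_sle_late (Y : tseq Q) e : slen Y = opow e.+1 ->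
  (forall c a, List.In c cs -> exists b, sle_within (tree_seq c) Y (opow_mul e a) (opow_mul e b)) ->
  sle X Y.
Proof.
move=> Y_len late; apply: (sle_late_blocks node_len) => n a.
have [b1 h1] := late _ a (child_In n); have [b2 h2] := late _ b1 cmax_In.
exists b2; apply: (sle_within_trans R_trans (block_node_sle_tcat n)).
apply: (sle_within_tcat _ _ h1 h2); apply: oltW.
  exact: sle_within_lt (tree_seq_gt0 _) h1.
exact: sle_within_lt (tree_seq_gt0 _) h2.
Qed.

Lemma indec_sle_node s h : indecomposable R s -> olt ozero (slen s) ->
  olt h (slen X) -> sle_within s X ozero h -> exists2 u, List.In u cs & sle s (tree_seq u).
Proof.
move=> hs hne hh hw.
have hw' : sle_within s X ozero (opow_mul H (odiv H h).+1).
  exact: sle_within_widen (ole_refl _) (oltW (olt_opow_mul_odiv hh)) hw.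
have [n _ /(sle_within_block node_len) hn] := indec_sle_within_block R_trans hs hne hw'.
case: (indec_sle_tcat R_trans hs (sle_trans R_trans hn (block_node_sle_tcat n))) => hu.
  by exists (child n); [exact: child_In|].
by exists cmax; [exact: cmax_In|].
Qed.

End Node.

Fixpoint leaves (t : tree Q) : list Q :=
  match t with
  | Leaf q => [:: q]
  | Node t0 ts => List.app (leaves t0) (List.concat (List.map leaves ts))
  end.

Lemma tval_in_leaves t i : olt i (slen (tree_seq t)) -> List.In (tval t i) (leaves t).
Proof.
elim/tree_ind_in: t i => [q|t0 ts IH] i; first by left.
case/tval_node_child => c hc [r hr ->]; apply: List.in_or_app.
move: (IH c hc r hr); case: hc => [<-|hc] h; first by left.
right; apply/List.in_concat; exists (leaves c); split; last exact: h.
exact: List.in_map.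
Qed.

Lemma tree_seq_indec t : indecomposable R (tree_seq t).
Proof.
case: t => [q|t0 ts] d hd0 hd; first by move: hd0; rewrite (olt_opow0 hd) olt_irr.
set H := hmax (t0 :: ts); set X := tree_seq (Node t0 ts).
have hdN : olt d (opow_mul H (odiv H d).+1) by exact: olt_opow_mul_odiv.
have late n a : exists b, sle_within (block X H n) X (opow_mul H a) (opow_mul H b).
  exists (size (t0 :: ts) * a + n).+1.
  apply: sle_within_widen (block_node_within t0 ts n a); last exact: ole_refl.
  by apply/opow_mul_le; apply: leq_trans (leq_addr _ _); rewrite leq_pmull.
apply: (sle_within_tail (up := slen X)).
apply: sle_within_widen (sle_within_late_blocks (node_len t0 ts) (odiv H d).+1 late).
  exact: oltW hdN.
exact: ole_refl.
Qed.

Lemma tree_seq_iF t : in_iF R (tree_seq t).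
Proof.
split; [move=> /(f_equal (@proj1_sig _ _)); rewrite val_opow //|split; last exact: tree_seq_indec].
by exists (leaves t); exact: tval_in_leaves.
Qed.

Lemma leT_leafE x y : leT R (Leaf x) (Leaf y) <-> R x y.
Proof. by split => [h|]; [inversion h|exact: leT_LL]. Qed.

Lemma leT_leaf_nodeE x t ts :
  leT R (Leaf x) (Node t ts) <-> exists2 u, List.In u (t :: ts) & leT R (Leaf x) u.
Proof. by split => [h|]; [inversion h|exact: leT_LN]. Qed.

Lemma leT_nodeE s ss t ts : leT R (Node s ss) (Node t ts) <->
  (forall v, List.In v (s :: ss) -> exists2 u, List.In u (t :: ts) & leT R v u).
Proof. by split => [h|]; [inversion h|exact: leT_NN]. Qed.

Lemma leT_node_leaf s ss y : ~ leT R (Node s ss) (Leaf y).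
Proof. by move=> h; inversion h. Qed.

Lemma sle_leaf_leT q y : sle (tree_seq (Leaf q)) (tree_seq y) -> leT R (Leaf q) y.
Proof.
elim/tree_ind_in: y => [q'|t0 ts IH] [g [_ /(_ ozero (opow_gt0 0)) [hg hq]]].
  exact/leT_leafE.
apply/leT_leaf_nodeE; case/tval_node_child: hg => c hc [r hr E].
exists c => //; apply: IH => //; exists (fun _ => r).
split => [i j hij /olt_opow0 ej|i _]; first by rewrite ej olt0 in hij.
by split => //=; rewrite -E.
Qed.

Lemma leT_leaf_sle q y : leT R (Leaf q) y -> sle (tree_seq (Leaf q)) (tree_seq y).
Proof.
elim/tree_ind_in: y => [q'|t0 ts IH].
  by move/leT_leafE => h; exists id; split => // i hi; split.
by case/leT_leaf_nodeE => u hu /(IH u hu) h; exact: (sle_trans R_trans h (child_sle hu)).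
Qed.

Lemma node_leaf_nsle t0 ts q : ~ sle (tree_seq (Node t0 ts)) (tree_seq (Leaf q)).
Proof.
move=> [g [hg1 hg2]].
have h1 : olt (opow 0) (slen (tree_seq (Node t0 ts))) by rewrite /= olt_opow val_opow.
have := hg1 _ _ (opow_gt0 0) h1; case: (hg2 _ h1) => /olt_opow0 -> _.
by rewrite olt0.
Qed.

Lemma leT_sle x y : leT R x y -> sle (tree_seq x) (tree_seq y).
Proof.
elim/tree_ind_in: x y => [q|t0 ts IH] y; first exact: leT_leaf_sle.
case: y => [q /leT_node_leaf //|d0 ds /leT_nodeE hc].
apply: (node_sle_late (node_len d0 ds)) => c a /[dup] /hc [u hu hcu] /IH /(_ u hcu) hs.
by exists (size (d0 :: ds) * a + size (d0 :: ds)); exact: (sle_child_within a hu hs).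
Qed.

Lemma sle_leT x y : sle (tree_seq x) (tree_seq y) -> leT R x y.
Proof.
elim/tree_ind_in: x y => [q|t0 ts IH] y; first exact: sle_leaf_leT.
case: y => [q /node_leaf_nsle //|d0 ds hXY]; apply/leT_nodeE => v hv.
case/In_child: (hv) => j ej.
have hw := sle_block_within (node_len t0 ts) (child_sle_block t0 ts j).
have [h hh hw'] := sle_within_sle_trans R_trans hw (opow_mul_lt_pow _ _) hXY.
rewrite ej in hw'.
have [u hu hvu] := indec_sle_node (@tree_seq_indec v) (tree_seq_gt0 v) hh hw'.
by exists u => //; exact: IH.
Qed.

End TreeSequence.

(** * Finite-range sequences are covered by finitely many tree sequences *)

Fixpoint subs (T : Type) (l : seq T) : list (list T) :=
  if l is x :: l' then List.app (List.map (cons x) (subs l')) (subs l') else [:: [::]].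

Lemma In_subs_filter (T : Type) (P : T -> Prop) (l : seq T) :
  exists2 ch, List.In ch (subs l) & forall t, List.In t ch <-> List.In t l /\ P t.
Proof.
elim: l => [|x l [ch hch Ech]] /=; first by exists [::] => [|t]; [left|split => [|[]]].
case: (classic (P x)) => hx.
  exists (x :: ch); first exact/List.in_or_app/or_introl/List.in_map.
  by move=> t /=; rewrite Ech; split => [[<-|[]]|[[<-|]]]; auto.
exists ch; first exact/List.in_or_app/or_intror.
by move=> t; rewrite Ech; split => [[]|[[<-|]]]; auto.
Qed.

Lemma cofinal_or_eventually_not (T : Type) (S : T -> nat -> Prop) (l : list T) :
  exists N0, forall t, List.In t l ->
    (forall N, exists2 n, N <= n & S t n) \/ (forall n, N0 <= n -> ~ S t n).
Proof.
elim: l => [|t l [N1 hN1]]; first by exists 0.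
case: (classic (forall N, exists2 n, N <= n & S t n)) => [hc|/not_all_ex_not [N hN]].
  by exists N1 => u [<-|/hN1]; [left|].
exists (maxn N N1) => u [<-|/hN1 [|h]]; [right|by left|right].
  by move=> n hn hs; apply: hN; exists n => //; exact: leq_trans (leq_maxl _ _) hn.
by move=> n hn; apply: h; exact: leq_trans (leq_maxr _ _) hn.
Qed.

Section Decomposition.
Variables (Q : Type) (R : Q -> Q -> Prop).
Hypothesis R_refl : forall x, R x x.
Hypothesis R_trans : forall x y z, R x y -> R y z -> R x z.
Variable q0 : Q.

Local Notation sle := (sle R).
Local Notation sle_within := (sle_within R).

Inductive cexpr := CPiece of tree Q | CCat of cexpr & cexpr | CNil.

Fixpoint ceval (E : cexpr) : tseq Q :=
  match E with
  | CPiece t => tree_seq t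
  | CCat a b => tcat (ceval a) (ceval b)
  | CNil => TSeq ozero (fun _ => q0)
  end.

Fixpoint pieces (E : cexpr) : list (tree Q) :=
  match E with
  | CPiece t => [:: t]
  | CCat a b => List.app (pieces a) (pieces b)
  | CNil => [::]
  end.

Lemma ceval_nil E : pieces E = [::] -> slen (ceval E) = ozero.
Proof.
elim: E => [t|a IHa b IHb|] //= /List.app_eq_nil [/IHa -> /IHb ->].
exact: ord_inj.
Qed.

Lemma sle_ceval_pieces s E : olt ozero (slen s) -> sle s (ceval E) -> exists t, List.In t (pieces E).
Proof.
case E_pieces: (pieces E) => [|t l] hs [f [_ /(_ _ hs) [hf _]]]; last by exists t; left.
by rewrite ceval_nil // olt0 in hf.
Qed.

Lemma indec_sle_ceval s E : indecomposable R s -> olt ozero (slen s) -> sle s (ceval E) ->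
  exists2 t, List.In t (pieces E) & sle s (tree_seq t).
Proof.
move=> hs hne; elim: E => [t|a IHa b IHb|] /= h; first by exists t => //; left.
  case: (indec_sle_tcat R_trans hs h) => [/IHa|/IHb] [t ht hst];
    by exists t => //; apply: List.in_or_app; auto.
by case: h => g [_ /(_ _ hne) []]; rewrite olt0.
Qed.

Lemma ceval_within c0 chs E : (forall t, List.In t (pieces E) -> List.In t (c0 :: chs)) ->
  forall a, exists2 b, a <= b & sle_within (ceval E) (tree_seq (Node c0 chs))
                                   (opow_mul (hmax (c0 :: chs)) a) (opow_mul (hmax (c0 :: chs)) b).
Proof.
elim: E => [t|E1 IH1 E2 IH2|] /= hE a.
- exists (size (c0 :: chs) * a + size (c0 :: chs)).
    by apply: leq_trans (leq_addr _ _); rewrite leq_pmull.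
  exact: (sle_child_within R_refl R_trans a (hE t (or_introl erefl)) (sle_refl _ _)).
- have [b1 h1 s1] := IH1 (fun t ht => hE t (List.in_or_app _ _ _ (or_introl ht))) a.
  have [b2 h2 s2] := IH2 (fun t ht => hE t (List.in_or_app _ _ _ (or_intror ht))) b1.
  by exists b2; [exact: leq_trans h1 h2|apply: (sle_within_tcat _ _ s1 s2); exact/opow_mul_le].
- by exists a => //; exact: sle_within_nil.
Qed.

Definition mkNode (l : seq (tree Q)) : tree Q := if l is t :: ts then Node t ts else Leaf q0.

(** Contains every tree of height at most [e] with leaves in [L], up to the order and
    repetition of children. *)
Fixpoint trees_upto (L : list Q) (e : nat) : list (tree Q) :=
  if e is e'.+1 then List.app (trees_upto L e') (List.map mkNode (subs (trees_upto L e')))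
  else List.map (@Leaf Q) L.

Lemma trees_upto_succ L e t : List.In t (trees_upto L e) -> List.In t (trees_upto L e.+1).
Proof. by move=> h; apply: List.in_or_app; left. Qed.

Lemma node_In_trees_upto L e c0 chs : List.In (c0 :: chs) (subs (trees_upto L e)) ->
  List.In (Node c0 chs) (trees_upto L e.+1).
Proof. by move=> h; apply: List.in_or_app; right; exact: (List.in_map mkNode _ _ h). Qed.

Definition cover L e (x : tseq Q) (E : cexpr) : Prop :=
  sle x (ceval E) /\
  forall t, List.In t (pieces E) -> List.In t (trees_upto L e) /\ sle (tree_seq t) x.

Lemma cover_opow0 L x : slen x = opow 0 -> List.In (sval x ozero) L ->
  cover L 0 x (CPiece (Leaf (sval x ozero))).
Proof.
move=> x_len hL; split => [|t [<-|[]]].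
  exists id; split => [i j hij|i]; rewrite x_len => /olt_opow0 ej; first by rewrite ej olt0 in hij.
  by rewrite ej; split => //; exact: opow_gt0.
split; first exact: List.in_map.
exists id; split => [i j hij /olt_opow0 ej|i /olt_opow0 ->]; first by rewrite ej olt0 in hij.
by split => //; rewrite x_len; exact: opow_gt0.
Qed.

Section PowerStep.
Variables (x : tseq Q) (e : nat).
Hypothesis x_len : slen x = opow e.+1.

Definition cofinal t := forall N, exists2 n, N <= n & sle (tree_seq t) (block x e n).

Lemma cofinal_node_sle c0 chs : (forall c, List.In c (c0 :: chs) -> cofinal c) ->
  sle (tree_seq (Node c0 chs)) x.
Proof.
move=> hc; apply: (node_sle_late R_refl R_trans x_len) => c a /hc /(_ a) [n hn hcn].
exists n.+1; apply: sle_within_widen (sle_block_within x_len hcn); last exact: ole_refl.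
exact/opow_mul_le.
Qed.

Variable E : nat -> cexpr.
Hypothesis E_cover : forall n, sle (block x e n) (ceval (E n)).

Lemma tail_sle_node N0 c0 chs :
  (forall n t, N0 <= n -> List.In t (pieces (E n)) -> List.In t (c0 :: chs)) ->
  sle (tail x (opow_mul e N0)) (tree_seq (Node c0 chs)).
Proof.
move=> hch; apply: (sle_late_blocks (tail_opow_mul_len x_len N0)) => n a.
have [b _ hb] := ceval_within (hch (N0 + n) ^~ (leq_addr _ _)) a; exists b.
apply: (sle_within_trans R_trans _ hb).
exact: (sle_trans R_trans (block_tail R_refl x e N0 n) (E_cover _)).
Qed.

Fixpoint cprefix k := if k is k'.+1 then CCat (cprefix k') (E k') else CNil.

Lemma In_cprefix k t : List.In t (pieces (cprefix k)) -> exists2 k', k' < k & List.In t (pieces (E k')).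
Proof.
elim: k => [|k IH] //= /(List.in_app_or _ _ _) [/IH [k' hk' h]|h]; last by exists k.
by exists k' => //; exact: ltnW.
Qed.

Lemma initial_sle_cprefix k : sle (initial x (opow_mul e k)) (ceval (cprefix k)).
Proof.
elim: k => [|k IH]; first by exists id; split => [i j _|i]; rewrite /= opow_mul0 olt0.
have hle : ole (opow_mul e k) (slen (initial x (opow_mul e k.+1))) by exact/opow_mul_le.
apply: (sle_trans R_trans (sle_initial_tail R_refl hle)); apply: sle_tcat => //.
apply: (sle_trans R_trans _ (E_cover k)); exists id; split => // i hi.
by rewrite /= osub_opow_mulS in hi; split.
Qed.

End PowerStep.

Lemma cover_opow_succ L e x : slen x = opow e.+1 ->
  (forall n, exists E, cover L e (block x e n) E) -> exists E, cover L e.+1 x E.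
Proof.
move=> x_len /functional_choice [E hE].
have E_cover n : sle (block x e n) (ceval (E n)) := (hE n).1.
have [N0 hN0] := cofinal_or_eventually_not (fun t n => sle (tree_seq t) (block x e n)) (trees_upto L e).
have [ch ch_subs Ech] := In_subs_filter (cofinal x e) (trees_upto L e).
have E_ch n t : N0 <= n -> List.In t (pieces (E n)) -> List.In t ch.
  move=> hn /(hE n).2 [hU hs]; apply/Ech; split => //.
  by case: (hN0 t hU) => // /(_ n hn).
have [t0 ht0] := sle_ceval_pieces (s := block x e N0) (opow_gt0 e) (E_cover N0).
case: ch ch_subs Ech E_ch => [|c0 chs] ch_subs Ech E_ch; first by case: (E_ch N0 t0 (leqnn _) ht0).
exists (CCat (cprefix E N0) (CPiece (Node c0 chs))); split.
  apply: (sle_trans R_trans (sle_initial_tail R_refl (oltW _))).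
    by rewrite x_len; exact: opow_mul_lt_pow.
  exact: sle_tcat (initial_sle_cprefix E_cover N0) (tail_sle_node x_len E_cover E_ch).
move=> t /(List.in_app_or _ _ _) [/In_cprefix [k _ /(hE k).2 [hU hs]]|[<-|[]]].
  split; first exact: trees_upto_succ.
  exact: (sle_trans R_trans hs (block_sle R_refl x_len k)).
split; first exact: node_In_trees_upto.
by apply: (cofinal_node_sle x_len) => c /Ech [].
Qed.

Lemma cover_opow L e x : slen x = opow e -> (forall i, olt i (slen x) -> List.In (sval x i) L) ->
  exists E, cover L e x E.
Proof.
elim: e x => [|e IHe] x x_len hL.
  by exists (CPiece (Leaf (sval x ozero))); apply: cover_opow0 => //; apply: hL; rewrite x_len opow_gt0.
apply: (cover_opow_succ x_len) => n; apply: IHe => // i hi.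
by apply: hL; rewrite x_len; exact: oadd_opow_mul_lt_pow.
Qed.

Lemma sle_ceval_pieces_sle x L : (forall i, olt i (slen x) -> List.In (sval x i) L) ->
  exists E, sle x (ceval E) /\ forall t, List.In t (pieces E) -> sle (tree_seq t) x.
Proof.
move: {2}(proj1_sig (slen x)) (erefl (proj1_sig (slen x))) => a.
elim: a x => [|e a IH] x hx hL.
  have x0 i : olt i (slen x) = false by rewrite /olt hx rlt_nil.
  by exists CNil; split => //; exists id; split => [i j _|i]; rewrite x0.
have hd : ole (opow e) (slen x) by rewrite /ole /olt hx val_opow /= ltnn rlt_nil andbF.
have [E1 [s1 p1]] : exists E, cover L e (initial x (opow e)) E.
  by apply: cover_opow => // i hi; apply: hL; exact: olt_le_trans hi hd.
have [E2 [s2 p2]] : exists E, sle (tail x (opow e)) (ceval E) /\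
    forall t, List.In t (pieces E) -> sle (tree_seq t) (tail x (opow e)).
  apply: IH => [|i hi]; first by rewrite /= hx val_opow /= eqxx; case: (a).
  by apply: hL; exact: oadd_lt hd hi.
exists (CCat E1 E2); split.
  exact: (sle_trans R_trans (sle_initial_tail R_refl hd) (sle_tcat s1 s2)).
move=> t /(List.in_app_or _ _ _) [/p1 [_ h]|/p2 h].
  exact: (sle_trans R_trans h (initial_sle R_refl hd)).
exact: (sle_trans R_trans h (tail_sle R_refl hd)).
Qed.

Lemma iF_tree_seq_equiv (s : iF R) :
  exists t, sle (tree_seq t) (proj1_sig s) /\ sle (proj1_sig s) (tree_seq t).
Proof.
case: s => s [hne [[L hL] hind]] /=.
have [E [hs hp]] := sle_ceval_pieces_sle hL.
have [t ht hst] := indec_sle_ceval hind (ogt0 hne) hs.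
by exists t; split => //; exact: hp.
Qed.

End Decomposition.

Unset Implicit Arguments.

Theorem theorem4p26 (Q : Type) (R : Q -> Q -> Prop)
  (R_refl : forall x, R x x)
  (R_trans : forall x y z, R x y -> R y z -> R x z)
  (Q_nonempty : inhabited Q) :
  exists (f : tree Q -> iF R) (g : iF R -> tree Q),
    (forall x y, leT R x y <-> sleF R (f x) (f y)) /\
    (forall x y, sleF R x y <-> leT R (g x) (g y)) /\
    (forall t, leT R (g (f t)) t /\ leT R t (g (f t))) /\
    (forall s, sleF R (f (g s)) s /\ sleF R s (f (g s))).
Proof.
case: Q_nonempty => q0.
pose f t : iF R := exist _ (tree_seq t) (tree_seq_iF R_refl t).
have [g hg] := @functional_choice _ _ _ (iF_tree_seq_equiv R_refl R_trans q0).
have hf x y : leT R x y <-> sleF R (f x) (f y).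
  by split; [exact: leT_sle|exact: sle_leT].
exists f, g; split; first exact: hf.
split.
  move=> x y; rewrite hf /sleF /=; case: (hg x) (hg y) => [hx1 hx2] [hy1 hy2].
  split => h; first exact: (sle_trans R_trans hx1 (sle_trans R_trans h hy2)).
  exact: (sle_trans R_trans hx2 (sle_trans R_trans h hy1)).
by split => [t|s]; [rewrite !hf; exact: hg (f t)|exact: hg].
Qed.
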